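(* Let $G=(V,E)$ be a finite, simple, undirected graph with $m=|E|\ge 1$ edges and no isolated vertices. Then for every partition $\Pi$ of $V$ into nonempty sets, the total null-adjusted persistence satisfies $\mathcal{P}^{\star}_{\Pi}\ge -1$. Moreover, if $G$ is multipartite, i.e. $V$ admits a partition $\Pi=\{V_1,\dots,V_k\}$ into nonempty independent sets (no edge has both endpoints in the same $V_j$), then $\mathcal{P}^{\star}_{\Pi}=-1$ for this canonical partition $\Pi$.
   Context: For a subset $\mathcal{C}\subseteq V$, let $m_i(\mathcal{C})$ be the number of edges with both endpoints in $\mathcal{C}$ and $m_e(\mathcal{C})$ the number of edges with exactly one endpoint in $\mathcal{C}$ (so $2m_i+m_e=\sum_{v\in\mathcal{C}}\deg v>0$ for nonempty $\mathcal{C}$ when there are no isolated vertices). The null-adjusted persistence of $\mathcal{C}$ is $\mathcal{P}^{\star}_{\mathcal{C}}=\frac{2m_i}{2m_i+m_e}-\frac{2m_i+m_e}{2m}$, where $m=|E|$. For a partition $\Pi$ of $V$, the total null-adjusted persistence is $\mathcal{P}^{\star}_{\Pi}=\sum_{\mathcal{C}\in\Pi}\mathcal{P}^{\star}_{\mathcal{C}}$. *)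

From mathcomp Require Import all_boot all_order all_algebra.
Set Implicit Arguments. Unset Strict Implicit. Unset Printing Implicit Defensive.
Import Order.TTheory GRing.Theory Num.Theory.

Definition simple_graph (T : finType) (e : rel T) : Prop :=
  symmetric e /\ irreflexive e.

Definition edges (T : finType) (e : rel T) : {set {set T}} :=
  [set E : {set T} | [exists x, exists y, e x y && (E == [set x; y])]].

Definition num_edges (T : finType) (e : rel T) : nat := #|edges e|.

Definition deg (T : finType) (e : rel T) (v : T) : nat := #|[set w | e v w]|.

Definition no_isolated (T : finType) (e : rel T) : Prop :=
  forall v : T, (0 < deg e v)%N.

Definition m_int (T : finType) (e : rel T) (C : {set T}) : nat :=
  #|[set E in edges e | E \subset C]|.

Definition m_ext (T : finType) (e : rel T) (C : {set T}) : nat :=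
  #|[set E in edges e | #|E :&: C| == 1%N]|.

Local Open Scope ring_scope.

Definition persistence (R : realFieldType) (T : finType) (e : rel T)
    (C : {set T}) : R :=
  let mi := (m_int e C)%:R in
  let me := (m_ext e C)%:R in
  let m := (num_edges e)%:R in
  (2 * mi) / (2 * mi + me) - (2 * mi + me) / (2 * m).

Definition total_persistence (R : realFieldType) (T : finType) (e : rel T)
    (P : {set {set T}}) : R :=
  \sum_(C in P) persistence R e C.

Definition independent (T : finType) (e : rel T) (C : {set T}) : bool :=
  [forall x in C, forall y in C, ~~ e x y].

From mathcomp Require Import all_boot all_order all_algebra.
Import Order.TTheory GRing.Theory Num.Theory.
Set Implicit Arguments. Unset Strict Implicit. Unset Printing Implicit Defensive.

(* An edge {x, y} meets the blocks of a partition in two vertices in total: two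
   in one block when it is internal to that block, one in each of two blocks
   otherwise.  Summing over edges, the volumes 2 m_i(C) + m_e(C) of the blocks
   add up to 2m, so the null terms sum to exactly 1 and the total persistence
   is (sum of the nonnegative ratios 2 m_i(C) / (2 m_i(C) + m_e(C))) - 1.  All
   these ratios vanish when every block is independent. *)

Lemma card_set_in_sum (U : finType) (A : {pred U}) (Q : pred U) :
  #|[set x in A | Q x]| = (\sum_(x in A) Q x)%N.
Proof.
by rewrite -sum1dep_card big_mkcondr; apply: eq_bigr => x _; case: (Q x).
Qed.

Section Counting.
Variable T : finType.
Implicit Types (C D E : {set T}) (P : {set {set T}}).

Lemma card_partition_setI P D E : partition P D -> E \subset D ->
  #|E| = (\sum_(C in P) #|E :&: C|)%N.
Proof.
case/and3P=> /eqP coverP trivP _ sED.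
rewrite -sum1_card (eq_bigl (fun x => (x \in cover P) && (x \in E))) => [|x].
  rewrite big_trivIset_cond //=; apply: eq_bigr => C _.
  by rewrite sum1dep_card; apply: eq_card => x; rewrite !inE andbC.
by rewrite coverP andb_idl // => /(subsetP sED).
Qed.

Lemma card2_setI E C : #|E| = 2 ->
  (2 * (E \subset C) + (#|E :&: C| == 1))%N = #|E :&: C|.
Proof.
move=> cardE.
have sub_card2 : (E \subset C) = (#|E :&: C| == 2).
  apply/setIidPl/eqP => [-> // | cardEC].
  by apply/eqP; rewrite eqEcard subsetIl cardEC cardE.
have : #|E :&: C| <= 2 by rewrite -cardE subset_leq_card ?subsetIl.
by rewrite sub_card2; case: #|E :&: C| => [|[|[|]]].
Qed.

Variable e : rel T.

Lemma m_int_independent C : independent e C -> m_int e C = 0.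
Proof.
move=> /forall_inP indepC; apply/eqP; rewrite cards_eq0; apply/eqP/setP => E.
rewrite !inE; apply/andP => -[/existsP[x /existsP[y /andP[exy /eqP ->]]]].
move=> /subsetP sxyC; have /forall_inP/(_ y) := indepC x (sxyC x (set21 x y)).
by rewrite sxyC ?set22 // exy => /(_ isT).
Qed.

Hypothesis irr_e : irreflexive e.

Lemma card_edge E : E \in edges e -> #|E| = 2.
Proof.
rewrite inE => /existsP[x /existsP[y /andP[exy /eqP ->]]].
by rewrite cards2; case: eqP exy => [-> | //]; rewrite irr_e.
Qed.

Definition volume C : nat := 2 * m_int e C + m_ext e C.

Lemma sum_volume_partition P : partition P [set: T] ->
  (\sum_(C in P) volume C)%N = 2 * num_edges e.
Proof.
move=> partP.
rewrite /num_edges -sum1_card big_distrr /=.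
under eq_bigr do rewrite /volume /m_int /m_ext !card_set_in_sum big_distrr -big_split.
rewrite exchange_big; apply: eq_bigr => E edgeE /=.
rewrite muln1 -[in RHS](card_edge edgeE) (card_partition_setI partP (subsetT E)).
by apply: eq_bigr => C _; rewrite card2_setI // card_edge.
Qed.

Local Open Scope ring_scope.
Variable R : realFieldType.

Lemma persistenceE C : persistence R e C =
  2 * (m_int e C)%:R / (volume C)%:R - (volume C)%:R / (2 * (num_edges e)%:R).
Proof. by rewrite /persistence /volume natrD natrM. Qed.

Lemma total_persistenceE P : (0 < num_edges e)%N -> partition P [set: T] ->
  total_persistence R e P = \sum_(C in P) 2 * (m_int e C)%:R / (volume C)%:R - 1.
Proof.
move=> m_gt0 partP; rewrite /total_persistence.
under eq_bigr do rewrite persistenceE.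
rewrite sumrB -mulr_suml -natr_sum sum_volume_partition // natrM mulfV //.
by rewrite mulf_neq0 ?pnatr_eq0 -?lt0n.
Qed.

End Counting.

Local Open Scope ring_scope.

Theorem proposition3 (R : realFieldType) (T : finType) (e : rel T) :
  simple_graph e -> (1 <= num_edges e)%N -> no_isolated e ->
  (forall P : {set {set T}}, partition P [set: T] ->
     -1 <= total_persistence R e P) /\
  (forall P : {set {set T}}, partition P [set: T] ->
     (forall C, C \in P -> independent e C) ->
     total_persistence R e P = -1).
Proof.
(* Isolated vertices are harmless: a block of volume 0 has ratio 0 / 0 = 0. *)
move=> [_ irr_e] m_gt0 _; split=> P partP.
  rewrite total_persistenceE // ler_wpDl //.
  by apply: sumr_ge0 => C _; rewrite divr_ge0 ?mulr_ge0.
move=> indepP; rewrite total_persistenceE // big1 ?sub0r // => C.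
by move=> /indepP/m_int_independent ->; rewrite mulr0 mul0r.
Qed.
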